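(* Let $f$ be an arithmetical function and let $g(n)=\sum_{d\mid n} f(d)$ for $n\ge 1$. Then for every integer $n\ge 1$, \[ \sum_{k=1}^{n} g(k)\,\omega(n-k)=\sum_{\substack{m+k=n\\ m\ge 1,\ k\ge 0}} f(m)\,\Omega_m(k). \]
   Context: $\omega:\mathbb{Z}\to\mathbb{Z}$ is defined by $\omega(0)=1$; $\omega(m)=(-1)^j$ if $m=\frac{3j^2+j}{2}$ or $m=\frac{3j^2-j}{2}$ for some integer $j\ge 1$; and $\omega(m)=0$ otherwise (in particular $\omega(m)=0$ for $m<0$). Thus $\prod_{n\ge1}(1-q^n)=\sum_{m\ge0}\omega(m)q^m$ (Euler's pentagonal number theorem). For integers $m\ge 1$ and $k$, $\Omega_m(k)=\sum_{j\ge 0}\omega(k-jm)=\omega(k)+\omega(k-m)+\omega(k-2m)+\cdots$ (a finite sum). *)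

From mathcomp Require Import all_boot all_order all_algebra.
Set Implicit Arguments. Unset Strict Implicit. Unset Printing Implicit Defensive.
Import Order.TTheory GRing.Theory Num.Theory.
Local Open Scope ring_scope.

(* Pentagonal-number coefficient omega : Z -> Z.
   omega 0 = 1; omega m = (-1)^j if m = (3j^2+j)/2 or m = (3j^2-j)/2 for some
   integer j >= 1; omega m = 0 otherwise (in particular for m < 0).
   For m > 0 any such j satisfies j <= m, so searching j in 1..m suffices.
   The two families of generalized pentagonal numbers are disjoint for j >= 1,
   and j is unique, so the value is well defined. *)
Definition is_pent (m : int) (j : nat) : bool :=
  (0 < j)%N && ((2 * m == (3 * (j:int)^+2 + (j:int))) || (2 * m == (3 * (j:int)^+2 - (j:int)))).

Definition omega (m : int) : int :=
  if m == 0 then 1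
  else if m < 0 then 0
  else let js := [seq j <- iota 1 `|m|%N | is_pent m j] in
       if js is j :: _ then (-1) ^+ j else 0.

(* Omega_m(k) = sum_{j >= 0} omega(k - j m); terms with j > |k| have negative
   argument (for m >= 1), hence vanish. *)
Definition Omega (m : nat) (k : int) : int :=
  \sum_(j < (`|k|%N).+1) omega (k - (j * m)%N%:Z).

From mathcomp Require Import all_boot all_order all_algebra.
From mathcomp Require Import zify.
Import Order.TTheory GRing.Theory Num.Theory.
Local Open Scope ring_scope.

(* Expand g as a divisor sum and exchange the two summations: the coefficient
   of f(d) collects omega(n - q d) over the multiples q d <= n of d, and the
   substitution q = j + 1 turns this into omega((n - d) - j d) summed over
   j >= 0, i.e. Omega_d(n - d).  Terms with q d > n cost nothing because
   omega vanishes at negative arguments. *)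

Lemma omega_lt0 (z : int) : z < 0 -> omega z = 0.
Proof. by move=> z_lt0; rewrite /omega (negbTE (ltr0_neq0 z_lt0)) z_lt0. Qed.

Lemma Omega_widen (m N : nat) (k : int) : (0 < m)%N -> (`|k| < N)%N ->
  Omega m k = \sum_(j < N) omega (k - (j * m)%N%:Z).
Proof.
move=> m_gt0 kN; rewrite /Omega (big_ord_widen N (fun j => omega (k - (j * m)%N%:Z))) //.
rewrite [RHS](bigID (fun j : 'I_N => (j < (`|k|%N).+1)%N)) /= [X in _ + X]big1 ?addr0 //.
by move=> j /negbTE j_gt; rewrite omega_lt0 //; move: j_gt; nia.
Qed.

Section DivisorSumExchange.

Variables (R : comPzRingType) (N : nat).

Lemma sum_divisors_nat (F : nat -> R) (k : nat) : (0 < k <= N)%N ->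
  \sum_(d <- divisors k) F d = \sum_(1 <= d < N.+1 | (d %| k)%N) F d.
Proof.
case/andP=> k_gt0 kN; rewrite -[RHS]big_filter; apply: perm_big.
apply: uniq_perm; [exact: divisors_uniq | by rewrite filter_uniq ?iota_uniq |].
move=> d; rewrite mem_filter mem_index_iota -dvdn_divisors //.
case dk: (d %| k)%N => //=.
by have := dvdn_leq k_gt0 dk; have := dvdn_gt0 k_gt0 dk; lia.
Qed.

Lemma sum_multiples (W : nat -> R) (d : nat) : (0 < d)%N ->
  (forall k, (N < k)%N -> W k = 0) ->
  \sum_(1 <= k < N.+1 | (d %| k)%N) W k = \sum_(j < N) W (j.+1 * d)%N.
Proof.
move=> d_gt0 W_out; rewrite big_mkcond /= big_nat.
have multiple_of_d k : (0 < k <= N)%N ->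
    (if (d %| k)%N then W k else 0) = \sum_(j < N | k == (j.+1 * d)%N) W k.
  case/andP=> k_gt0 kN; case: ifPn => [/dvdnP[q def_k] | ndk]; last first.
    by rewrite big1 // => j /eqP def_k; rewrite def_k dvdn_mull in ndk.
  have q_gt0 : (0 < q)%N by move: k_gt0; rewrite def_k muln_gt0 => /andP[].
  have q_le : (q.-1 < N)%N by have := leq_pmulr q d_gt0; lia.
  rewrite (bigD1 (Ordinal q_le)) /= ?def_k ?prednK // big1 ?addr0 //.
  by move=> j /andP[]; rewrite eqn_pmul2r // -val_eqE /= => /eqP-> /negP[].
transitivity (\sum_(1 <= k < N.+1) \sum_(j < N | k == (j.+1 * d)%N) W k).
  by rewrite !big_nat; apply: eq_bigr.
rewrite (exchange_big_dep xpredT) //=.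
apply: eq_bigr => j _; rewrite -big_filter.
case: (leqP (j.+1 * d) N) => [jdN | jdN].
  rewrite (@perm_big _ _ _ _ _ [:: (j.+1 * d)%N]) ?big_seq1 //.
  apply: uniq_perm; rewrite ?filter_uniq ?iota_uniq // => k.
  rewrite mem_filter mem_index_iota inE andb_idr // => /eqP ->.
  by rewrite muln_gt0 d_gt0.
rewrite W_out // big1_seq // => k /andP[_]; rewrite mem_filter => /andP[/eqP -> _].
exact: W_out.
Qed.

Lemma sum_divisors_exchange (f W : nat -> R) :
  (forall k, (N < k)%N -> W k = 0) ->
  \sum_(1 <= k < N.+1) (\sum_(d <- divisors k) f d) * W k =
  \sum_(1 <= d < N.+1) f d * \sum_(j < N) W (j.+1 * d)%N.
Proof.
move=> W_out; transitivity (\sum_(1 <= k < N.+1) \sum_(1 <= d < N.+1 | (d %| k)%N) f d * W k).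
  rewrite !big_nat; apply: eq_bigr => k k_range.
  by rewrite sum_divisors_nat // big_distrl.
rewrite (exchange_big_dep_nat xpredT) //= !big_nat; apply: eq_bigr => d /andP[d_gt0 _].
by rewrite -sum_multiples // big_distrr.
Qed.

End DivisorSumExchange.

Theorem theorem1 (R : comRingType) (f : nat -> R) (n : nat) :
  (1 <= n)%N ->
  let g := fun k : nat => \sum_(d <- divisors k) f d in
  \sum_(1 <= k < n.+1) g k * (omega (n%:Z - k%:Z))%:~R =
  \sum_(1 <= m < n.+1) f m * (Omega m (n - m)%N%:Z)%:~R.
Proof.
move=> _ g; rewrite sum_divisors_exchange => [|k nk]; last first.
  by rewrite omega_lt0 //; lia.
rewrite !big_nat; apply: eq_bigr => d /andP[d_gt0 dn]; congr (_ * _).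
rewrite (@Omega_widen _ n) ?absz_nat //; last by lia.
by rewrite rmorph_sum; apply: eq_bigr => j _; congr (omega _)%:~R; lia.
Qed.
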